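(* Let $L=\sum_{k=1}^m P_{n_k}$ be a linear forest and $n$ a positive integer. If $L\in\operatorname{obs}(P_n)$, then: (1) $m_1\le 1$; (2) $n_k\in\{1,2,4,6\}$ for all $k\in\{1,\dots,m\}$; (3) if $n_k\in\{4,6\}$ for some $k$, then $m_1=1$.
   Context: All graphs are finite, simple and loopless. $P_n$ denotes the path on $n$ vertices ($P_1=K_1$, $P_2=K_2$). A linear forest is a disjoint union of paths; $\sum_{k=1}^m P_{n_k}$ denotes the linear forest whose $k$-th component is the path on $n_k$ vertices, and $m_i$ denotes the number of indices $k$ with $n_k=i$. A full-homomorphism $\varphi\colon G\to H$ is a map $V(G)\to V(H)$ such that for all $x,y\in V(G)$, $xy\in E(G)$ if and only if $\varphi(x)\varphi(y)\in E(H)$. A full $H$-colouring of $G$ is a full-homomorphism $G\to H$. A minimal $H$-obstruction is a graph $G$ that admits no full $H$-colouring while every proper induced subgraph of $G$ admits one; $\operatorname{obs}(H)$ denotes the set of minimal $H$-obstructions (up to isomorphism). *)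

(* Simple graphs = symmetric irreflexive boolean relations on a finType. *)
From mathcomp Require Import all_boot.
Set Implicit Arguments. Unset Strict Implicit. Unset Printing Implicit Defensive.

Definition full_hom (V W : finType) (e : rel V) (h : rel W) (f : V -> W) : Prop :=
  forall x y : V, e x y = h (f x) (f y).

Definition full_colourable (V W : finType) (e : rel V) (h : rel W) : Prop :=
  exists f : V -> W, full_hom e h f.

Definition induced (V : finType) (e : rel V) (S : {set V}) : rel (sig (fun x : V => x \in S)) :=
  fun x y => e (val x) (val y).

Definition min_obstruction (V W : finType) (e : rel V) (h : rel W) : Prop :=
  ~ full_colourable e h /\
  forall S : {set V}, S \proper [set: V] -> full_colourable (@induced V e S) h.

Definition path_rel (n : nat) : rel 'I_n :=
  fun i j => (i.+1 == j :> nat) || (j.+1 == i :> nat).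

(* The linear forest sum_{k<m} P_{ns k}: vertices are pairs (k, i), i < ns k. *)
Definition forest_rel (m : nat) (ns : 'I_m -> nat) : rel {k : 'I_m & 'I_(ns k)} :=
  fun x y => (tag x == tag y) &&
    (((tagged x).+1 == tagged y :> nat) || ((tagged y).+1 == tagged x :> nat)).

Definition mult (m : nat) (ns : 'I_m -> nat) (i : nat) : nat :=
  #|[set k : 'I_m | ns k == i]|.
Arguments forest_rel : clear implicits.
Arguments induced : clear implicits.
Arguments path_rel : clear implicits.

From mathcomp Require Import all_boot zify.
Set Implicit Arguments. Unset Strict Implicit. Unset Printing Implicit Defensive.

(* Twin extension: a vertex
   with the same neighbours as another one can be deleted and recoloured
   with its twin's colour, so a minimal obstruction has no twins; this rules
   out two P_1 components and any P_3 component (whose ends are twins).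
   Gap counting: a full homomorphism into P_n, restricted to a set of
   vertices split into "pieces" that no edge or colour class crosses, uses
   at least one free vertex after each piece, so (#colours + #pieces <= n+1).

   Conversely, a linear forest whose components, laid side by side with one
   free vertex between consecutive ones (a P_3 folded onto two vertices),
   fit into P_n is fully P_n-colourable.  For a component P_N with N = 5 or
   N >= 7, and for N in {4, 6} when there is no P_1 component, deleting a
   well-chosen vertex v splits it into two pieces without creating a foldable
   P_3 or an isolated vertex that could share a colour; gap counting on a
   colouring of G - v then shows that G itself fits, contradicting
   minimality. *)

Lemma colouring_of_induced (V W : finType) (e : rel V) (h : rel W) (S : {set V}) (w0 : W) :
  full_colourable (induced V e S) h ->
  exists g : V -> W, {in S &, forall x y, e x y = h (g x) (g y)}.
Proof.
case=> f hf; exists (fun x => oapp f w0 (insub x)) => x y Sx Sy.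
have subT z (Sz : z \in S) : insub z = Some (exist (fun x => x \in S) z Sz).
  exact: (@insubT V (fun x => x \in S)).
by rewrite (subT x Sx) (subT y Sy) /= -hf.
Qed.

(* Twin extension: if [v] has the same neighbours as another vertex [u]
   (outside [v] itself), a full colouring of [G - v] extends to [G] by
   giving [v] the colour of [u]. *)
Lemma twin_extension (V W : finType) (e : rel V) (h : rel W) (u v : V) :
  irreflexive e -> symmetric e -> irreflexive h -> symmetric h ->
  u != v -> (forall y, y != v -> e v y = e u y) ->
  full_colourable (induced V e (setT :\ v)) h -> full_colourable e h.
Proof.
move=> irr sym hirr hsym uv twin Hc.
have Su : u \in setT :\ v by rewrite !inE uv.
have [f _] := Hc.
have [g hg] := colouring_of_induced (f (Sub u Su)) Hc.
have inS y : y != v -> y \in setT :\ v by rewrite !inE andbT.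
exists (fun x => g (if x == v then u else x)) => x y.
case: (eqVneq x v) => [->|xv]; case: (eqVneq y v) => [->|yv].
- by rewrite irr hirr.
- by rewrite twin // hg ?inS.
- by rewrite sym twin // sym hg ?inS.
- by rewrite hg ?inS.
Qed.

Lemma path_rel_irr n : irreflexive (path_rel n).
Proof. by move=> p; rewrite /path_rel; apply/negbTE; lia. Qed.

Lemma path_rel_sym n : symmetric (path_rel n).
Proof. by move=> p q; rewrite /path_rel orbC. Qed.

(* Then the values of [g] together with one extra vertex per label -- the
   successor of the largest value taken on that label -- are pairwise
   distinct vertices of [P_(n+1)]: each label needs its own free gap. *)
Section GapCount.
Variables (V C : finType) (e : rel V) (n : nat) (D : {set V}).
Variables (g : V -> 'I_n) (c : V -> C).
Hypothesis g_hom : {in D &, forall x y, e x y = path_rel n (g x) (g y)}.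
Hypothesis c_adj : {in D &, forall x y, e x y -> c x = c y}.
Hypothesis c_fibre : {in D &, forall x y, g x = g y -> c x = c y}.

(* The largest value of [g] on the label [l]; its successor is the gap
   reserved for [l]. *)
Definition label_top (l : C) : nat := \max_(x in D | c x == l) g x.

Lemma label_top_ub x : x \in D -> g x <= label_top (c x).
Proof. by move=> Dx; apply: leq_bigmax_cond; rewrite Dx eqxx. Qed.

Lemma label_top_attained l :
  l \in c @: D -> exists2 x, x \in D & c x = l /\ g x = label_top l :> nat.
Proof.
case/imsetP=> x0 Dx0 ->.
have [|x /andP [Dx /eqP cx] E] := @eq_bigmax_cond _ [pred x | (x \in D) && (c x == c x0)] g.
  by apply/card_gt0P; exists x0; rewrite !inE Dx0 eqxx.
by exists x => //; split=> //; rewrite /label_top -E; apply: eq_bigl.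
Qed.

Lemma inord_eq (a b : nat) : a <= n -> b <= n -> inord a = inord b :> 'I_n.+1 -> a = b.
Proof. by move=> an bn /(congr1 (@nat_of_ord _)); rewrite !inordK. Qed.

Lemma gap_count : #|g @: D| + #|c @: D| <= n.+1.
Proof.
pose vals : {set 'I_n.+1} := [set inord (i : 'I_n) | i in g @: D].
pose gaps : {set 'I_n.+1} := [set inord (label_top l).+1 | l in c @: D].
have top_lt l : l \in c @: D -> label_top l < n.
  by case/label_top_attained=> x _ [_ <-].
have vals_card : #|vals| = #|g @: D|.
  apply: card_in_imset => i j _ _ /inord_eq.
  by move=> /(_ (ltnW (ltn_ord i)) (ltnW (ltn_ord j))) /val_inj.
have gaps_card : #|gaps| = #|c @: D|.
  apply: card_in_imset => l1 l2 L1 L2 /inord_eq E.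
  have Etop : label_top l1 = label_top l2 by apply/succn_inj/E; apply: top_lt.
  have [x1 Dx1 [cx1 g1]] := label_top_attained L1.
  have [x2 Dx2 [cx2 g2]] := label_top_attained L2.
  rewrite -cx1 -cx2; apply: c_fibre => //; apply/val_inj.
  by rewrite /= g1 g2 Etop.
have gaps_free : gaps \subset ~: vals.
  apply/subsetP=> _ /imsetP [l L ->]; rewrite inE.
  apply/imsetP=> -[_ /imsetP [y Dy ->] /inord_eq E].
  have gy : (label_top l).+1 = g y by apply: E; [apply: top_lt | apply: ltnW].
  have [x Dx [cx gx]] := label_top_attained L.
  have exy : e x y by rewrite g_hom // /path_rel gx gy eqxx.
  by have := label_top_ub Dy; rewrite -(c_adj Dx Dy exy) cx -gy ltnn.
rewrite -vals_card -gaps_card.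
apply: (@leq_trans (#|vals| + #|~: vals|)); first by rewrite leq_add2l subset_leq_card.
by rewrite cardsC card_ord.
Qed.

End GapCount.

Lemma tagged_ord_eq (I : Type) (T : I -> nat) (x y : {i : I & 'I_(T i)}) :
  tag x = tag y -> tagged x = tagged y :> nat -> x = y.
Proof.
case: x => i u; case: y => i' u' /= ii; subst i' => uu.
by congr existT; apply: val_inj.
Qed.

(* The number of vertices of a path needed to fully colour [P_N]: the two
   ends of [P_3] are twins and may share a colour; no other path has twins. *)
Definition span (N : nat) : nat := if N == 3 then 2 else N.

Lemma span_le N : span N <= N.
Proof. by rewrite /span; case: ifP => /eqP; lia. Qed.

(* The position of the vertex deleted from a component [P_N], [N > 3]: it
   leaves [P_1 + P_4] from [P_6] and [P_2 + P_(N-3)] otherwise, never a [P_3]. *)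
Definition cut (N : nat) : nat := if N == 6 then 1 else 2.

Lemma path_twins (N a i j : nat) (cut_here : bool) :
  i < N -> j < N -> i != j ->
  (cut_here -> [/\ 3 < N, a = cut N, i != a & j != a]) ->
  (forall p, p < N -> ~~ (cut_here && (p == a)) ->
     ((i.+1 == p) || (p.+1 == i)) = ((j.+1 == p) || (p.+1 == j))) ->
  ~~ cut_here /\ N = 3 /\ (i = 2 \/ j = 2).
Proof.
move=> iN jN ij hcut tw.
have up_i : i.+1 < N -> ~~ (cut_here && (i.+1 == a)) -> j = i.+2.
  by move=> p1 p2; move: (tw _ p1 p2); rewrite eqxx /= => /esym/orP [] /eqP; lia.
have up_j : j.+1 < N -> ~~ (cut_here && (j.+1 == a)) -> i = j.+2.
  by move=> p1 p2; move: (tw _ p1 p2); rewrite eqxx /= => /orP [] /eqP; lia.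
have down_i : 0 < i -> ~~ (cut_here && (i.-1 == a)) -> j.+2 = i.
  move=> p1 p2; have p1' : i.-1 < N by lia.
  by move: (tw _ p1' p2); rewrite prednK // eqxx orbT => /esym/orP [] /eqP; lia.
have down_j : 0 < j -> ~~ (cut_here && (j.-1 == a)) -> i.+2 = j.
  move=> p1 p2; have p1' : j.-1 < N by lia.
  by move: (tw _ p1' p2); rewrite prednK // eqxx orbT => /orP [] /eqP; lia.
case: cut_here {tw} hcut up_i up_j down_i down_j => /= [/(_ isT) [N3 -> ia ja]|_]; last by lia.
by rewrite /cut in ia ja *; case: ifP ia ja => /eqP h6; lia.
Qed.


Section Forest.
Variables (m : nat) (ns : 'I_m -> nat).
Hypothesis ns_pos : forall k, 0 < ns k.
Local Notation V := {k : 'I_m & 'I_(ns k)}.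
Local Notation e := (forest_rel m ns).

Definition idx (x : V) : nat := tagged x.

Lemma idx_lt (x : V) : idx x < ns (tag x).
Proof. exact: ltn_ord. Qed.

(* The vertex at position [j] of component [k] (meaningful for [j < ns k]). *)
Definition vtx (k : 'I_m) (j : nat) : V :=
  existT (fun k => 'I_(ns k)) k (insubd (Ordinal (ns_pos k)) j).

Lemma vtx_idx k j : j < ns k -> idx (vtx k j) = j.
Proof. by move=> hj; rewrite /idx /vtx /= val_insubd hj. Qed.

Lemma forest_irr : irreflexive e.
Proof. by move=> x; rewrite /forest_rel; apply/negbTE; lia. Qed.

Lemma forest_sym : symmetric e.
Proof. by move=> x y; rewrite /forest_rel eq_sym orbC. Qed.

Lemma adj_vtx x k p : p < ns k ->
  e x (vtx k p) = (tag x == k) && (((idx x).+1 == p) || (p.+1 == idx x)).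
Proof. by move=> hp; rewrite /forest_rel -/(idx x) -/(idx (vtx k p)) vtx_idx. Qed.

Lemma adj_isolated k y : ns k = 1 -> e y (vtx k 0) = false.
Proof.
move=> nk; rewrite adj_vtx ?nk //; case: eqP => //= tk.
by have := idx_lt y; rewrite tk nk; case: (idx y).
Qed.

Lemma adj_P3_ends k y : ns k = 3 -> e y (vtx k 0) = e y (vtx k 2).
Proof.
move=> nk; rewrite !adj_vtx ?nk //; case: eqP => //= tk.
by have := idx_lt y; rewrite tk nk; case: (idx y) => [|[|[|]]].
Qed.

(* Layout: if the components, each occupying [span] vertices and followed by
   one free vertex, fit into [P_(n+1)], then the forest is fully [P_n]-colourable:
   place the components side by side, folding each [P_3] onto [P_2]. *)
Section Layout.
Variable n : nat.
Hypothesis fits : \sum_(k < m) (span (ns k)).+1 <= n.+1.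

Definition offset (l : nat) : nat := \sum_(j < m | j < l) (span (ns j)).+1.

Lemma offset_step (k : 'I_m) l : k < l -> offset k + (span (ns k)).+1 <= offset l.
Proof.
move=> kl; rewrite /offset [in X in _ <= X](bigD1 k) //= addnC leq_add2l.
rewrite big_mkcond [X in _ <= X]big_mkcond; apply: leq_sum => j _.
by case: ifP => // jk; rewrite (ltn_trans jk kl) /=; case: eqP jk => // ->; rewrite ltnn.
Qed.

Definition fold_pos (x : V) : nat :=
  if (ns (tag x) == 3) && (idx x == 2) then 0 else idx x.

Lemma fold_pos_lt (x : V) : fold_pos x < span (ns (tag x)).
Proof. by have := idx_lt x; rewrite /fold_pos /span; case: ifP; case: ifP; lia. Qed.

Lemma layout_lt (x : V) : offset (tag x) + fold_pos x < n.
Proof.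
have := offset_step (ltn_ord (tag x)); have := fold_pos_lt x.
have -> : offset m = \sum_(k < m) (span (ns k)).+1 by apply: eq_bigl => j; rewrite ltn_ord.
by move: fits; lia.
Qed.

(* Within a block, adjacency is preserved by the (folded) positions; distinct
   blocks are separated by their free vertex. *)
Lemma layout_colouring : full_colourable e (path_rel n).
Proof.
exists (fun x => Ordinal (layout_lt x)) => x y; rewrite /path_rel /forest_rel /=.
rewrite -/(idx x) -/(idx y).
case: (ltngtP (tag x) (tag y)) => [xy|yx|/val_inj exy].
- have := offset_step xy; have := fold_pos_lt x; rewrite -val_eqE (ltn_eqF xy) /=; lia.
- have := offset_step yx; have := fold_pos_lt y; rewrite -val_eqE (gtn_eqF yx) /=; lia.
- have := idx_lt x; have := idx_lt y; rewrite /fold_pos -exy eqxx /=.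
  by case: ifP; case: ifP; lia.
Qed.

End Layout.

(* Assume the forest has at most one [P_1]
   component, and none when [N] is 4 or 6 (the cases where the deletion leaves
   an isolated vertex). *)
Section Deletion.
Variables (n : nat) (k0 : 'I_m).
Hypothesis long_k0 : 3 < ns k0.
Hypothesis one_isolated : forall k k', ns k = 1 -> ns k' = 1 -> k = k'.
Hypothesis isolated_free : (ns k0 == 4) || (ns k0 == 6) -> forall k, ns k != 1.
Local Notation a := (cut (ns k0)).
Local Notation v := (vtx k0 a).
Local Notation D := (setT :\ v).
Variable g : V -> 'I_n.
Hypothesis g_hom : {in D &, forall x y, e x y = path_rel n (g x) (g y)}.

Lemma cut_bounds : 0 < a /\ a.+2 <= ns k0.
Proof. by rewrite /cut; case: ifP => /eqP; lia. Qed.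

Lemma mem_rest x : (x \in D) = (x != v).
Proof. by rewrite !inE andbT. Qed.

Lemma vtx_in_rest k p : p < ns k -> ~~ ((k == k0) && (p == a)) -> vtx k p \in D.
Proof.
move=> hp hne; rewrite mem_rest; apply: contraNneq hne => vE.
have [_ a_lt] := cut_bounds.
have := congr1 (@idx) vE; have := congr1 tag vE; rewrite /= !vtx_idx //; last lia.
by move=> -> ->; rewrite !eqxx.
Qed.

Lemma idx_ne_cut x : x \in D -> tag x = k0 -> idx x != a.
Proof.
rewrite mem_rest => xv tx; apply: contra xv => /eqP ia; apply/eqP/tagged_ord_eq => //.
by have [_ a_lt] := cut_bounds; change (idx x = idx v); rewrite ia vtx_idx //; lia.
Qed.

(* The components of [G - v]: a component of the forest, and for [k0] the
   side of the deleted vertex. *)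
Definition piece (x : V) : 'I_m * bool := (tag x, (tag x == k0) && (a < idx x)).

Lemma piece_adj : {in D &, forall x y, e x y -> piece x = piece y}.
Proof.
move=> x y Dx Dy /andP [/eqP txy hxy]; rewrite /piece -txy; congr pair.
case: (eqVneq (tag x) k0) => //= tx.
have := idx_ne_cut Dx tx; have := idx_ne_cut Dy (etrans (esym txy) tx).
by move: hxy; rewrite /idx; lia.
Qed.

Lemma isolated_vertex x : x \in D -> {in D, forall z, ~~ e x z} ->
  ns (tag x) = 1 \/ tag x = k0 /\ ((ns k0 == 4) || (ns k0 == 6)).
Proof.
move=> Dx iso; have x_lt := idx_lt x.
have no_up : (idx x).+1 < ns (tag x) -> ~~ ((tag x == k0) && ((idx x).+1 == a)) -> False.
  by move=> p1 p2; have := iso _ (vtx_in_rest p1 p2); rewrite adj_vtx // !eqxx.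
have no_down : 0 < idx x -> ~~ ((tag x == k0) && ((idx x).-1 == a)) -> False.
  move=> p1 p2; have p1' := leq_ltn_trans (leq_pred (idx x)) x_lt.
  by have := iso _ (vtx_in_rest p1' p2); rewrite adj_vtx // prednK // !eqxx orbT.
case: (eqVneq (tag x) k0) => tx /= in no_up no_down; last first.
  left; have := no_up^~ isT; have := no_down^~ isT; move: x_lt.
  by set N := ns (tag x); set i := idx x; lia.
right; split=> //; have := idx_ne_cut Dx tx.
rewrite tx in x_lt no_up no_down; move: x_lt no_up no_down; set i := idx x.
by rewrite /cut; case: ifP => /eqP; lia.
Qed.

Lemma twins_in_rest x y : x \in D -> y \in D -> x != y -> {in D, forall z, e x z = e y z} ->
  piece x = piece y /\ ns (tag x) = 3 /\ (idx x = 2 \/ idx y = 2).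
Proof.
move=> Dx Dy xy tw; case: (eqVneq (tag x) (tag y)) => txy.
  have y_lt : idx y < ns (tag x) by rewrite txy; apply: idx_lt.
  have ne : idx x != idx y by apply: contra xy => /eqP /(tagged_ord_eq txy) ->.
  have cut_ok : tag x == k0 -> [/\ 3 < ns (tag x), a = cut (ns (tag x)), idx x != a & idx y != a].
    by move=> /eqP tx; rewrite tx; split=> //; apply: idx_ne_cut; rewrite -?txy.
  have tw_path p : p < ns (tag x) -> ~~ ((tag x == k0) && (p == a)) ->
      ((idx x).+1 == p) || (p.+1 == idx x) = ((idx y).+1 == p) || (p.+1 == idx y).
    by move=> hp hpa; have := tw _ (vtx_in_rest hp hpa); rewrite !adj_vtx // -txy eqxx.
  have [nc [N3 ends]] := path_twins (idx_lt x) y_lt ne cut_ok tw_path.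
  by rewrite /piece -txy (negbTE nc).
have isolated_of u w : u \in D -> tag u != tag w -> {in D, forall z, e u z = e w z} ->
    {in D, forall z, ~~ e u z}.
  move=> Du tuw tw' z Dz; apply/negP => euz; have := tw' z Dz.
  rewrite euz => /esym /andP [/eqP twz _]; move: euz => /andP [/eqP tuz _].
  by move: tuw; rewrite tuz twz eqxx.
have iso_x := isolated_of x y Dx txy tw.
have tyx : tag y != tag x by rewrite eq_sym.
have iso_y := isolated_of y x Dy tyx (fun z Dz => esym (tw z Dz)).
exfalso; have [nx|[tx small]] := isolated_vertex Dx iso_x.
  have [ny|[_ small]] := isolated_vertex Dy iso_y.
    by move: txy; rewrite (one_isolated nx ny) eqxx.
  by move: (isolated_free small (tag x)); rewrite nx.
have [ny|[ty _]] := isolated_vertex Dy iso_y.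
  by move: (isolated_free small (tag y)); rewrite ny.
by move: txy; rewrite tx ty eqxx.
Qed.

Lemma piece_fibre : {in D &, forall x y, g x = g y -> piece x = piece y}.
Proof.
move=> x y Dx Dy gxy; case: (eqVneq x y) => [-> //|xy].
have tw : {in D, forall z, e x z = e y z} by move=> z Dz; rewrite !g_hom // gxy.
by have [] := twins_in_rest Dx Dy xy tw.
Qed.

(* [G - v] has [m + 1] pieces: every component, with [k0] split in two. *)
Lemma pieces_count : m.+1 <= #|piece @: D|.
Proof.
have [a_pos a_lt] := cut_bounds.
pose label (o : option 'I_m) := if o is Some k then (k, false) else (k0, true).
have label_inj : injective label by do 2![case=> [?|]] => //= -[->].
have -> : m.+1 = #|label @: [set: option 'I_m]|.
  by rewrite (card_imset _ label_inj) cardsT card_option card_ord.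
apply/subset_leq_card/subsetP => _ /imsetP [[k|] _ ->]; apply/imsetP.
  exists (vtx k 0); last by rewrite /piece vtx_idx // ltn0 andbF.
  by apply: vtx_in_rest => //; rewrite /cut; case: ifP; rewrite andbF.
exists (vtx k0 (ns k0).-1).
  by apply: vtx_in_rest; [lia | rewrite eqxx /=; lia].
by rewrite /piece vtx_idx /=; [rewrite eqxx; congr pair; lia | lia].
Qed.

(* The vertices of [G - v] other than the folded ends of [P_3]'s receive
   pairwise distinct colours. *)
Lemma values_count : \sum_(k < m) span (ns k) <= #|g @: D|.+1.
Proof.
pose W := {k : 'I_m & 'I_(span (ns k))}.
pose emb (w : W) : V := vtx (tag w) (tagged w).
have emb_idx w : idx (emb w) = tagged w.
  by rewrite vtx_idx // (leq_trans (ltn_ord _) (span_le _)).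
have emb_inj : injective emb.
  move=> w1 w2 E; apply: tagged_ord_eq; first exact: (congr1 tag E).
  by rewrite -!emb_idx E.
pose E := emb @: [set: W] :\ v.
have E_D : E \subset D by apply/subsetP => x; rewrite !inE => /andP [-> _].
have g_inj : {in E &, injective g}.
  move=> x y /setD1P [xv /imsetP [w1 _ x_def]] /setD1P [yv /imsetP [w2 _ y_def]] gxy.
  apply/eqP/negPn/negP => ne; subst x y.
  rewrite -mem_rest in xv; rewrite -mem_rest in yv.
  have tw : {in D, forall z, e (emb w1) z = e (emb w2) z}.
    by move=> z Dz; rewrite (g_hom xv Dz) (g_hom yv Dz) gxy.
  have [/(congr1 fst) /= t12 [N3 ends]] := twins_in_rest xv yv ne tw.
  have l1 := ltn_ord (tagged w1); have l2 := ltn_ord (tagged w2).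
  rewrite !emb_idx in ends; move: (tagged w1 : nat) (tagged w2 : nat) l1 l2 ends => j1 j2.
  by rewrite /span -t12 N3 /=; lia.
have W_card : #|[set: W]| = \sum_(k < m) span (ns k).
  rewrite cardsT card_tagged sumnE big_map big_enum /=.
  by apply: eq_bigr => k _; rewrite card_ord.
rewrite -W_card -(card_imset _ emb_inj) (cardsD1 v) -(card_in_imset g_inj).
by rewrite -addn1 addnC leq_add ?leq_b1 // subset_leq_card // imsetS.
Qed.

Lemma deletion_bound : \sum_(k < m) (span (ns k)).+1 <= n.+1.
Proof.
under eq_bigr do rewrite -addn1.
rewrite big_split /= sum1_card card_ord.
have := gap_count g_hom piece_adj piece_fibre.
have := pieces_count; have := values_count.
(* Naming the cardinals lets [lia] identify their syntactically distinct copies. *)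
set S := \sum_(k < m) _; set A := #|g @: D|; set B := #|piece @: D|; lia.
Qed.

End Deletion.
End Forest.

(* A minimal obstruction has no twins: otherwise deleting one of them gives a
   colourable graph, whose colouring extends back by twin extension. *)
Lemma min_obstruction_twin_free (V W : finType) (e : rel V) (h : rel W) (u v : V) :
  irreflexive e -> symmetric e -> irreflexive h -> symmetric h ->
  min_obstruction e h -> u != v -> (forall y, y != v -> e v y = e u y) -> False.
Proof.
move=> irr sym hirr hsym [no_col minimal] uv twin; apply: no_col.
exact: (twin_extension irr sym hirr hsym uv twin (minimal _ (properD1 (in_setT v)))).
Qed.

Section Obstruction.
Variables (m : nat) (ns : 'I_m -> nat) (n : nat).
Hypothesis ns_pos : forall k, 0 < ns k.
Hypothesis obs : min_obstruction (forest_rel m ns) (path_rel n).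

Lemma forest_twin_free u v : u != v ->
  (forall y, y != v -> forest_rel m ns v y = forest_rel m ns u y) -> False.
Proof.
move=> uv twin.
exact: (min_obstruction_twin_free (@forest_irr m ns) (@forest_sym m ns)
  (@path_rel_irr n) (@path_rel_sym n) obs uv twin).
Qed.

(* Two [P_1] components would be twins. *)
Lemma one_isolated_component k k' : ns k = 1 -> ns k' = 1 -> k = k'.
Proof.
move=> nk nk'; apply/eqP/negPn/negP => kk'.
apply: (@forest_twin_free (vtx ns_pos k 0) (vtx ns_pos k' 0)).
  by apply: contra kk' => /eqP /(congr1 tag) /= ->.
by move=> y _; rewrite forest_sym [RHS]forest_sym !adj_isolated.
Qed.

(* The ends of a [P_3] component would be twins. *)
Lemma no_P3_component k : ns k != 3.
Proof.
apply/negP => /eqP nk3; apply: (@forest_twin_free (vtx ns_pos k 0) (vtx ns_pos k 2)).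
  by apply/eqP => /(congr1 (@idx _ _)); rewrite !vtx_idx ?nk3.
by move=> y _; rewrite forest_sym [RHS]forest_sym adj_P3_ends.
Qed.

(* No component [P_N], [N > 3], admits the deletion argument: a colouring of
   [G - v] would make [G] colourable by the layout. *)
Lemma no_cut_component (k0 : 'I_m) : 0 < n -> 3 < ns k0 ->
  ((ns k0 == 4) || (ns k0 == 6) -> forall k, ns k != 1) -> False.
Proof.
move=> n_pos long isolated_free; have [no_col minimal] := obs.
pose v := vtx ns_pos k0 (cut (ns k0)).
have [g g_hom] := colouring_of_induced (Ordinal n_pos) (minimal _ (properD1 (in_setT v))).
apply/no_col/layout_colouring.
exact: (deletion_bound long one_isolated_component isolated_free g_hom).
Qed.

End Obstruction.

Theorem lemma2p4 (m : nat) (ns : 'I_m -> nat) (n : nat) :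
  (forall k, 0 < ns k) -> 0 < n ->
  min_obstruction (forest_rel m ns) (path_rel n) ->
  [/\ mult ns 1 <= 1,
      (forall k, ns k \in [:: 1; 2; 4; 6]) &
      ((exists k, (ns k == 4) || (ns k == 6)) -> mult ns 1 = 1)].
Proof.
move=> ns_pos n_pos obs.
have mult_le1 : mult ns 1 <= 1.
  rewrite leqNgt; apply/card_gt1P => -[k [k' []]]; rewrite !inE => /eqP nk /eqP nk'.
  by rewrite (one_isolated_component ns_pos obs nk nk') eqxx.
split=> // [k | [k small]].
  apply/negPn/negP; rewrite !inE => bad.
  have long : 3 < ns k by move: bad (no_P3_component ns_pos obs k) (ns_pos k); lia.
  by apply: (no_cut_component ns_pos obs n_pos long) => small; move: bad small; lia.
apply/eqP; rewrite eqn_leq mult_le1 lt0n; apply/negP => /eqP /cards0_eq no_isolated.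
have long : 3 < ns k by move: small; lia.
apply: (no_cut_component ns_pos obs n_pos long) => _ k'.
by apply/negP => /eqP nk'; have := in_set0 k'; rewrite -no_isolated inE nk'.
Qed.
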